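(* Let $r>0$ and $A\in\mathrm{GL}(2,\mathbb{R})$. There exists $s_0$ such that for all $s\ge s_0$, for every $\Gamma\in\mathcal{H}$ and every non-empty compact $K\subseteq\mathbb{R}^2$ with $K\in\mathcal{LA}_s(\Gamma)$, we have $A(K)\in\mathcal{LA}_r(A(\Gamma))$.
   Context: $d_H$ is the Hausdorff distance. $\mathcal{H}$ is the set of homothety types: non-empty compact subsets of $\mathbb{R}^2$ modulo the group generated by translations and homotheties of positive ratio; $A(\Gamma)$ is the homothety type of $A(\hat\Gamma)$ for any $\hat\Gamma\in\Gamma$. For $r>0$, $\Gamma\in\mathcal{H}$ and non-empty compact $K$, $K\in\mathcal{LA}_r(\Gamma)$ ($K$ is an $r$-large approximate of $\Gamma$) means $\mathrm{diam}(K)>r$ and there is $\hat\Gamma\in\Gamma$ of diameter $1$ with $d_H(K/\mathrm{diam}(K),\hat\Gamma)<1/r$. *)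

From HB Require Import structures.
From mathcomp Require Import all_boot all_order all_algebra.
From mathcomp Require Import all_classical all_reals all_analysis.
Set Implicit Arguments. Unset Strict Implicit. Unset Printing Implicit Defensive.
Import Order.TTheory GRing.Theory Num.Theory.
Import numFieldNormedType.Exports.
Local Open Scope classical_set_scope.
Local Open Scope ring_scope.

Section Plane.
Variable R : realType.

Definition edist (p q : R * R) : R :=
  Num.sqrt ((p.1 - q.1) ^+ 2 + (p.2 - q.2) ^+ 2).

(* Non-empty compact subsets of R^2 (product = Euclidean topology). *)
Definition ncompact (K : set (R * R)) : Prop := K !=set0 /\ compact K.

Definition diam (K : set (R * R)) : R :=
  sup [set edist x y | x in K & y in K].

Definition pdist (x : R * R) (L : set (R * R)) : R :=
  inf [set edist x y | y in L].

Definition dH (K L : set (R * R)) : R :=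
  Num.max (sup [set pdist x L | x in K]) (sup [set pdist y K | y in L]).

Definition homot (l : R) (t : R * R) (p : R * R) : R * R :=
  (l * p.1 + t.1, l * p.2 + t.2).

Definition scale (c : R) (K : set (R * R)) : set (R * R) :=
  [set (c * p.1, c * p.2) | p in K].

Definition htclass (K0 : set (R * R)) : set (set (R * R)) :=
  [set K | exists l t, 0 < l /\ K = homot l t @` K0].

Definition homothety_type (G : set (set (R * R))) : Prop :=
  exists K0, ncompact K0 /\ G = htclass K0.

Definition mact (A : 'M[R]_2) (p : R * R) : R * R :=
  (A 0 0 * p.1 + A 0 1 * p.2, A 1 0 * p.1 + A 1 1 * p.2).

(* A(Gamma): the homothety type of A(Gamma_hat) for (any) Gamma_hat in Gamma *)
Definition img_type (A : 'M[R]_2) (G : set (set (R * R))) : set (set (R * R)) :=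
  [set L | exists Gh, G Gh /\ htclass (mact A @` Gh) L].

Definition LA (r : R) (G : set (set (R * R))) (K : set (R * R)) : Prop :=
  diam K > r /\
  exists Gh, G Gh /\ diam Gh = 1 /\ dH (scale (diam K)^-1 K) Gh < r^-1.

End Plane.

From Pilot Require Import Defs.
From HB Require Import structures.
From mathcomp Require Import all_boot all_order all_algebra.
From mathcomp Require Import all_classical all_reals all_analysis.
From mathcomp Require Import ring lra.
Import Order.TTheory GRing.Theory Num.Theory.
Import numFieldNormedType.Exports.
Local Open Scope classical_set_scope.
Local Open Scope ring_scope.

Set Implicit Arguments.
Unset Strict Implicit.

(* A linear isomorphism T of the plane stretches distances by at most M and shrinks them by
   at most 1/N, with M, N the Frobenius norms of T and T^-1.  If K / diam K is d-close in
   Hausdorff distance to some G of diameter 1, then T(K / diam K) and T(G) are Md-close, so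
   their diameters rho, ga lie in [1/N, M] and differ by at most 2Md.  Rescaling the two sets
   by 1/rho and 1/ga about a common point keeps them (NM + 4N^2M^2)d-close; the first one is
   T(K) / diam T(K), the second is homothetic to T(G), hence of type A(Gamma).  As moreover
   diam T(K) >= diam K / N, both requirements of r-largeness hold once d = 1/s is small. *)

(* [edist] would otherwise be MathComp-Analysis' extended distance. *)
Local Notation edist := Defs.edist.

Section EuclideanPlane.
Variable R : realType.
Implicit Types (a b c e : R) (p q z : R * R) (X Y : set (R * R)).

Definition enorm a b : R := Num.sqrt (a ^+ 2 + b ^+ 2).

Lemma enorm_ge0 a b : 0 <= enorm a b.
Proof. exact: sqrtr_ge0. Qed.

Lemma enormD a b a' b' : enorm (a + a') (b + b') <= enorm a b + enorm a' b'.
Proof.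
have u0 := enorm_ge0 a b; have v0 := enorm_ge0 a' b'.
have hu : enorm a b ^+ 2 = a ^+ 2 + b ^+ 2 by rewrite sqr_sqrtr // addr_ge0 ?sqr_ge0.
have hv : enorm a' b' ^+ 2 = a' ^+ 2 + b' ^+ 2 by rewrite sqr_sqrtr // addr_ge0 ?sqr_ge0.
rewrite {1}/enorm -[X in _ <= X]ger0_norm ?addr_ge0 // -sqrtr_sqr ler_sqrt ?sqr_ge0 //.
set u := enorm a b in u0 hu *; set v := enorm a' b' in v0 hv *.
have cauchy_schwarz : a * a' + b * b' <= u * v.
  have : (a * a' + b * b') ^+ 2 <= (u * v) ^+ 2.
    by rewrite exprMn hu hv; have := sqr_ge0 (a * b' - b * a'); nra.
  have : 0 <= u * v by exact: mulr_ge0.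
  nra.
nra.
Qed.

Lemma enormZ c a b : enorm (c * a) (c * b) = `|c| * enorm a b.
Proof. by rewrite /enorm !exprMn -mulrDr sqrtrM ?sqr_ge0 // sqrtr_sqr. Qed.

Lemma edistE p q : edist p q = enorm (p.1 - q.1) (p.2 - q.2).
Proof. by []. Qed.

Lemma edist_ge0 p q : 0 <= edist p q.
Proof. exact: enorm_ge0. Qed.

Lemma edistC p q : edist p q = edist q p.
Proof. by rewrite !edistE /enorm -(sqrrN (p.1 - _)) -(sqrrN (p.2 - _)) !opprB. Qed.

Lemma edist_triangle p q z : edist p z <= edist p q + edist q z.
Proof.
rewrite !edistE.
have -> : p.1 - z.1 = (p.1 - q.1) + (q.1 - z.1) by ring.
have -> : p.2 - z.2 = (p.2 - q.2) + (q.2 - z.2) by ring.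
exact: enormD.
Qed.

Definition dilate c p : R * R := (c * p.1, c * p.2).

Lemma scaleE c X : scale c X = dilate c @` X.
Proof. by []. Qed.

Lemma dilateM a b p : dilate a (dilate b p) = dilate (a * b) p.
Proof. by rewrite /dilate /=; congr pair; ring. Qed.

Lemma edist_dilate c p q : edist (dilate c p) (dilate c q) = `|c| * edist p q.
Proof. by rewrite !edistE -enormZ; congr enorm => /=; ring. Qed.

Lemma edist_homot l t p q : 0 < l -> edist (homot l t p) (homot l t q) = l * edist p q.
Proof.
by move=> l_gt0; rewrite !edistE -[l in RHS]gtr0_norm // -enormZ; congr enorm => /=; ring.
Qed.

(* [homot b (dilate (a - b) z)] agrees with [dilate a] at [z]. *)
Lemma edist_dilate_homot a b p q z :
  edist (dilate a p) (homot b (dilate (a - b) z) q)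
  <= `|a| * edist p q + `|a - b| * edist q z.
Proof.
rewrite !edistE -!enormZ /=.
have -> : a * p.1 - (b * q.1 + (a - b) * z.1) = a * (p.1 - q.1) + (a - b) * (q.1 - z.1) by ring.
have -> : a * p.2 - (b * q.2 + (a - b) * z.2) = a * (p.2 - q.2) + (a - b) * (q.2 - z.2) by ring.
exact: enormD.
Qed.

Definition elipschitz M (f : R * R -> R * R) :=
  forall p q, edist (f p) (f q) <= M * edist p q.

Definition ecolipschitz N (f : R * R -> R * R) :=
  forall p q, edist p q <= N * edist (f p) (f q).

Definition edists X := [set edist x y | x in X & y in X].

Definition ebounded X := has_ubound (edists X).

Lemma diam_ub X x y : ebounded X -> X x -> X y -> edist x y <= diam X.
Proof. by move=> bX Xx Xy; apply: ub_le_sup => //; exists x => //; exists y. Qed.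

Lemma diam_le X b : X !=set0 ->
  (forall x y, X x -> X y -> edist x y <= b) -> diam X <= b.
Proof.
move=> [x0 Xx0] le_b; apply: ge_sup; first by exists (edist x0 x0), x0 => //; exists x0.
by move=> _ [x Xx [y Xy <-]]; apply: le_b.
Qed.

Lemma diam_gt0 X : 0 < diam X -> X !=set0 /\ ebounded X.
Proof.
move=> dX; have : has_sup (edists X).
  by apply: contrapT => /sup_out supX; move: dX; rewrite /diam supX ltxx.
by case=> [[_ [x Xx _]] bX]; split => //; exists x.
Qed.

Lemma diam_eq1_bounded X : diam X = 1 -> X !=set0 /\ ebounded X.
Proof. by move=> dX; apply: diam_gt0; rewrite dX. Qed.

Section Image.
Variable f : R * R -> R * R.

Lemma ebounded_img M X : elipschitz M f -> 0 <= M -> ebounded X -> ebounded (f @` X).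
Proof.
move=> fM M0 [b bX]; exists (M * b) => _ [_ [x Xx <-] [_ [y Xy <-] <-]].
by apply: le_trans (fM x y) _; rewrite ler_wpM2l // bX //; exists x => //; exists y.
Qed.

Lemma diam_img_le M X : elipschitz M f -> 0 <= M -> X !=set0 -> ebounded X ->
  diam (f @` X) <= M * diam X.
Proof.
move=> fM M0 [x0 Xx0] bX; apply: diam_le; first by exists (f x0), x0.
move=> _ _ [x Xx <-] [y Xy <-].
by apply: le_trans (fM x y) _; rewrite ler_wpM2l // diam_ub.
Qed.

Lemma diam_img_ge N X : ecolipschitz N f -> 0 <= N -> X !=set0 -> ebounded (f @` X) ->
  diam X <= N * diam (f @` X).
Proof.
move=> fN N0 X0 bfX; apply: diam_le => // x y Xx Xy.
by apply: le_trans (fN x y) _; rewrite ler_wpM2l // diam_ub.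
Qed.

Lemma diam_similarity c X : (forall p q, edist (f p) (f q) = c * edist p q) ->
  0 < c -> X !=set0 -> ebounded X -> diam (f @` X) = c * diam X.
Proof.
move=> fc c0 X0 bX; have fM : elipschitz c f by move=> p q; rewrite fc.
apply/le_anti/andP; split; first exact: diam_img_le (ltW c0) X0 bX.
have fN : ecolipschitz c^-1 f by move=> p q; rewrite fc mulKf ?gt_eqF.
rewrite -ler_pdivlMl //.
by apply: diam_img_ge; rewrite ?invr_ge0 ?ltW //; apply: ebounded_img fM (ltW c0) bX.
Qed.

Lemma img_scale c X : (forall k, {morph f : p / dilate k p}) ->
  f @` scale c X = scale c (f @` X).
Proof.
move=> f_dilate; rewrite !scaleE; apply/seteqP; split=> _ [_ [x Xx <-] <-].
  by exists (f x); [exists x | rewrite f_dilate].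
by exists (dilate c x); [exists x | rewrite f_dilate].
Qed.

End Image.

Definition normalize X := scale (diam X)^-1 X.

Lemma diam_scale c X : 0 < c -> X !=set0 -> ebounded X -> diam (scale c X) = c * diam X.
Proof.
by move=> c0; apply: diam_similarity => // p q; rewrite edist_dilate gtr0_norm.
Qed.

Lemma diam_normalize X : 0 < diam X -> diam (normalize X) = 1.
Proof.
move=> dX; have [X0 bX] := diam_gt0 dX.
by rewrite diam_scale ?mulVf ?gt_eqF ?invr_gt0.
Qed.

Lemma normalize_scale c X : 0 < c -> X !=set0 -> ebounded X ->
  normalize (scale c X) = normalize X.
Proof.
move=> c0 X0 bX; rewrite /normalize diam_scale // !scaleE.
have dilateK x : dilate (c * diam X)^-1 (dilate c x) = dilate (diam X)^-1 x.
  by rewrite dilateM invfM mulrAC mulVf ?gt_eqF ?mul1r.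
apply/seteqP; split=> p.
  by case=> _ [x Xx <-] <-; exists x; rewrite ?dilateK.
by case=> x Xx <-; exists (dilate c x); [exists x | rewrite dilateK].
Qed.

Definition hclose e X Y :=
  (forall x, X x -> exists2 y, Y y & edist x y <= e) /\
  (forall y, Y y -> exists2 x, X x & edist x y <= e).

Lemma hcloseC e X Y : hclose e X Y -> hclose e Y X.
Proof.
case=> XY YX; split=> [y /YX[x Xx] | x /XY[y Yy]]; rewrite edistC; by [exists x | exists y].
Qed.

Lemma hclose_le e e' X Y : e <= e' -> hclose e X Y -> hclose e' X Y.
Proof.
move=> le_e [XY YX]; split=> [x /XY[y Yy le_xy] | y /YX[x Xx le_xy]].
  by exists y => //; apply: le_trans le_e.
by exists x => //; apply: le_trans le_e.
Qed.

Lemma pdist_le x Y y : Y y -> pdist x Y <= edist x y.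
Proof.
by move=> Yy; apply: ge_inf; [exists 0 => _ [z _ <-]; apply: edist_ge0 | exists y].
Qed.

Lemma dH_lt_near e X Y : Y !=set0 -> ebounded X -> dH X Y < e ->
  forall x, X x -> exists2 y, Y y & edist x y < e.
Proof.
move=> [y0 Yy0] bX dXY x Xx.
have /inf_lt[] : pdist x Y < e.
- apply: le_lt_trans dXY; rewrite /dH le_max; apply/orP; left.
  apply: ub_le_sup; last by exists x.
  exists (diam X + edist x y0) => _ [z Xz <-].
  apply: le_trans (pdist_le z Yy0) _; apply: le_trans (edist_triangle z x y0) _.
  by rewrite lerD2r diam_ub.
- by exists (edist x y0), y0.
by move=> _ [y Yy <-] lt_e; exists y.
Qed.

Lemma hclose_dH_lt e X Y : X !=set0 -> Y !=set0 -> ebounded X -> ebounded Y ->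
  dH X Y < e -> hclose e X Y.
Proof.
move=> X0 Y0 bX bY dXY; split=> [x Xx | y Yy].
  by have [y Yy /ltW] := dH_lt_near Y0 bX dXY Xx; exists y.
have dYX : dH Y X < e by rewrite /dH maxC.
by have [x Xx /ltW] := dH_lt_near X0 bY dYX Yy; rewrite edistC; exists x.
Qed.

Lemma dH_le_hclose e X Y : X !=set0 -> Y !=set0 -> hclose e X Y -> dH X Y <= e.
Proof.
move=> [x0 Xx0] [y0 Yy0] [XY YX]; rewrite /dH ge_max; apply/andP; split.
  apply: ge_sup; first by exists (pdist x0 Y), x0.
  by move=> _ [x /XY[y Yy le_xy] <-]; apply: le_trans (pdist_le x Yy) le_xy.
apply: ge_sup; first by exists (pdist y0 X), y0.
move=> _ [y /YX[x Xx le_xy] <-].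
by rewrite edistC in le_xy; apply: le_trans (pdist_le y Xx) le_xy.
Qed.

Lemma hclose_img (f : R * R -> R * R) M e X Y : elipschitz M f -> 0 <= M ->
  hclose e X Y -> hclose (M * e) (f @` X) (f @` Y).
Proof.
move=> fM M0 [XY YX]; split=> _ [x Xx <-].
  have [y Yy le_xy] := XY x Xx; exists (f y); first by exists y.
  by apply: le_trans (fM x y) _; rewrite ler_wpM2l.
have [y Yy le_xy] := YX x Xx; exists (f y); first by exists y.
by apply: le_trans (fM y x) _; rewrite ler_wpM2l.
Qed.

Lemma hclose_diam e X Y : X !=set0 -> ebounded Y -> hclose e X Y ->
  diam X <= diam Y + 2 * e.
Proof.
move=> X0 bY [XY _]; apply: diam_le => // x1 x2 /XY[y1 Yy1 e1] /XY[y2 Yy2 e2].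
have := edist_triangle x1 y1 x2; have := edist_triangle y1 y2 x2.
have := diam_ub bY Yy1 Yy2; rewrite (edistC y2); lra.
Qed.

Lemma hclose_rescale a b e X Y z : ebounded X -> X z -> hclose e X Y ->
  hclose (`|a| * e + `|a - b| * (e + diam X))
         (dilate a @` X) (homot b (dilate (a - b) z) @` Y).
Proof.
move=> bX Xz [XY YX].
have near_z x y : X x -> edist x y <= e ->
    edist (dilate a x) (homot b (dilate (a - b) z) y)
    <= `|a| * e + `|a - b| * (e + diam X).
  move=> Xx le_xy; apply: le_trans (edist_dilate_homot a b x y z) _.
  apply: lerD; first by rewrite ler_wpM2l.
  rewrite ler_wpM2l //; apply: le_trans (edist_triangle y x z) _.
  by rewrite edistC lerD // diam_ub.
split=> _ [x Xx <-].
  have [y Yy le_xy] := XY x Xx.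
  by exists (homot b (dilate (a - b) z) y); [exists y | exact: near_z].
by have [y Yy le_xy] := YX x Xx; exists (dilate a y); [exists y | exact: near_z].
Qed.

Lemma normalize_hclose e X Y : 0 < diam X -> 0 < diam Y -> hclose e X Y ->
  exists L, [/\ htclass Y L, diam L = 1 &
    hclose (e / diam X + 2 * e * (e + diam X) / (diam X * diam Y)) (normalize X) L].
Proof.
move=> dX dY XY; have [[z Xz] bX] := diam_gt0 dX; have [Y0 bY] := diam_gt0 dY.
have e0 : 0 <= e by have [y _ /(le_trans (edist_ge0 z y))] := XY.1 z Xz.
have rho_ga : `|diam Y - diam X| <= 2 * e.
  have := hclose_diam (ex_intro _ z Xz) bY XY.
  have := hclose_diam Y0 bX (hcloseC XY); rewrite ler_norml; lra.
set rho := diam X in dX rho_ga *; set ga := diam Y in dY rho_ga *.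
exists (homot ga^-1 (dilate (rho^-1 - ga^-1) z) @` Y); split.
- by exists ga^-1, (dilate (rho^-1 - ga^-1) z); rewrite invr_gt0.
- rewrite (diam_similarity (c := ga^-1)) ?mulVf ?gt_eqF ?invr_gt0 // => p q.
  by rewrite edist_homot ?invr_gt0.
rewrite /normalize scaleE -/rho; apply: hclose_le (hclose_rescale _ _ bX Xz XY).
have -> : rho^-1 - ga^-1 = (ga - rho) / (rho * ga) by field; rewrite !gt_eqF.
have rho_inv0 : 0 < rho^-1 by rewrite invr_gt0.
have rga_inv0 : 0 < (rho * ga)^-1 by rewrite invr_gt0 mulr_gt0.
rewrite normrM (gtr0_norm rho_inv0) (gtr0_norm rga_inv0) mulrC lerD2l.
have e_rho0 : 0 <= e + rho by rewrite addr_ge0 // ltW.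
by rewrite -/rho mulrAC !ler_wpM2r // ltW.
Qed.

Section MatrixAction.
Implicit Types (A B : 'M[R]_2).

Lemma mact_mulmx A B p : mact (A *m B) p = mact A (mact B p).
Proof.
have lift0 : lift ord0 ord0 = 1 :> 'I_2 by apply/val_inj.
by rewrite /mact !mxE !big_ord_recl !big_ord0 !addr0 lift0 /=; congr pair; ring.
Qed.

Lemma mact1 p : mact 1%:M p = p.
Proof. by case: p => x y; rewrite /mact !mxE /=; congr pair; ring. Qed.

Lemma mact_invmx A p : A \in unitmx -> mact (invmx A) (mact A p) = p.
Proof. by move=> uA; rewrite -mact_mulmx mulVmx // mact1. Qed.

Lemma mact_dilate A c p : mact A (dilate c p) = dilate c (mact A p).
Proof. by rewrite /mact /dilate /=; congr pair; ring. Qed.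

Definition frobenius2 A := A 0 0 ^+ 2 + A 0 1 ^+ 2 + A 1 0 ^+ 2 + A 1 1 ^+ 2.

Lemma elipschitz_mact A : elipschitz (Num.sqrt (frobenius2 A)) (mact A).
Proof.
move=> p q; have f0 : 0 <= frobenius2 A by rewrite /frobenius2 !addr_ge0 ?sqr_ge0.
rewrite !edistE /enorm -sqrtrM // ler_sqrt ?mulr_ge0 ?addr_ge0 ?sqr_ge0 //= /frobenius2.
set u := p.1 - q.1; set v := p.2 - q.2.
have -> : A 0 0 * p.1 + A 0 1 * p.2 - (A 0 0 * q.1 + A 0 1 * q.2) = A 0 0 * u + A 0 1 * v.
  by rewrite /u /v; ring.
have -> : A 1 0 * p.1 + A 1 1 * p.2 - (A 1 0 * q.1 + A 1 1 * q.2) = A 1 0 * u + A 1 1 * v.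
  by rewrite /u /v; ring.
have := sqr_ge0 (A 0 0 * v - A 0 1 * u); have := sqr_ge0 (A 1 0 * v - A 1 1 * u).
nra.
Qed.

Lemma ecolipschitz_mact A : A \in unitmx ->
  ecolipschitz (Num.sqrt (frobenius2 (invmx A))) (mact A).
Proof.
move=> uA p q; rewrite -{1}(mact_invmx p uA) -{1}(mact_invmx q uA).
exact: elipschitz_mact.
Qed.

End MatrixAction.

Lemma normalize_img (f : R * R -> R * R) M X :
  (forall c, {morph f : p / dilate c p}) -> elipschitz M f -> 0 <= M ->
  0 < diam X -> normalize (f @` normalize X) = normalize (f @` X).
Proof.
move=> f_dilate fM M0 dX; have [[x Xx] bX] := diam_gt0 dX.
rewrite {2}/normalize img_scale // normalize_scale ?invr_gt0 //.
  by exists (f x), x.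
exact: ebounded_img fM M0 bX.
Qed.

Lemma distortion_le (M N d rho ga : R) : 0 <= d <= 1 -> 0 <= M -> 0 <= N ->
  1 <= N * rho -> 1 <= N * ga -> rho <= M ->
  M * d / rho + 2 * (M * d) * (M * d + rho) / (rho * ga)
  <= (N * M + 4 * N ^+ 2 * M ^+ 2) * d.
Proof.
move=> /andP[d0 d1] M0 N0 N_rho N_ga rho_M.
have inv_le x : 1 <= N * x -> 0 < x /\ x^-1 <= N.
  move=> N_x; have x0 : 0 < x.
    by rewrite ltNge; apply/negP => /(mulr_ge0_le0 N0); lra.
  by rewrite -div1r ler_pdivrMr.
have [rho0 rhoV] := inv_le _ N_rho; have [ga0 gaV] := inv_le _ N_ga.
have Md0 : 0 <= M * d by exact: mulr_ge0.
have first : M * d / rho <= N * M * d.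
  by rewrite mulrC -mulrA ler_wpM2r.
have second : 2 * (M * d) * (M * d + rho) / (rho * ga) <= 4 * N ^+ 2 * M ^+ 2 * d.
  have Mdrho : M * d + rho <= 2 * M by nra.
  have VV : (rho * ga)^-1 <= N ^+ 2.
    by rewrite invfM expr2; apply: ler_pM => //; rewrite invr_ge0 ltW.
  suff : 2 * (M * d) * (M * d + rho) / (rho * ga) <= 2 * (M * d) * (2 * M) * N ^+ 2 by lra.
  apply: ler_pM => //.
  - by apply: mulr_ge0; [exact: mulr_ge0 | rewrite addr_ge0 // ltW].
  - by rewrite invr_ge0 ltW // mulr_gt0.
  - by rewrite ler_wpM2l // mulr_ge0.
have := lerD first second; lra.
Qed.

Lemma LA_bilipschitz_img (f : R * R -> R * R) (M N r s : R) G K :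
  (forall c, {morph f : p / dilate c p}) ->
  elipschitz M f -> ecolipschitz N f -> 0 <= M -> 0 <= N -> 0 < r ->
  1 + r * N + r * (N * M + 4 * N ^+ 2 * M ^+ 2) <= s -> LA s G K ->
  LA r [set L | exists Gh, G Gh /\ htclass (f @` Gh) L] (f @` K).
Proof.
move=> f_dilate fM fN M0 N0 r0; set C := N * M + 4 * N ^+ 2 * M ^+ 2 => s_ge.
move=> [dK [Gh [GGh [dGh dKGh]]]].
have C0 : 0 <= C by rewrite addr_ge0 ?mulr_ge0 ?sqr_ge0.
have s1 : 1 <= s by have := mulr_ge0 (ltW r0) N0; have := mulr_ge0 (ltW r0) C0; lra.
have [K0 bK] := diam_gt0 (lt_le_trans ltr01 (le_trans s1 (ltW dK))).
set X := normalize K in dKGh.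
have dX : diam X = 1 by apply: diam_normalize; lra.
have [X0 bX] := diam_eq1_bounded dX.
have [Gh0 bGh] := diam_eq1_bounded dGh.
have XGh : hclose s^-1 X Gh by exact: hclose_dH_lt.
have dfX_le : diam (f @` X) <= M by rewrite -[M]mulr1 -dX diam_img_le.
have dfX_ge : 1 <= N * diam (f @` X).
  by rewrite -dX; apply: diam_img_ge => //; exact: ebounded_img fM M0 bX.
have dfGh_ge : 1 <= N * diam (f @` Gh).
  by rewrite -dGh; apply: diam_img_ge => //; exact: ebounded_img fM M0 bGh.
have pos x : 1 <= N * x -> 0 < x.
  by move=> Nx; rewrite ltNge; apply/negP => /(mulr_ge0_le0 N0); lra.
have [L [GhL dL fXL]] :=
  normalize_hclose (pos _ dfX_ge) (pos _ dfGh_ge) (hclose_img fM M0 XGh).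
have dfK : diam K <= N * diam (f @` K).
  by apply: diam_img_ge => //; exact: ebounded_img fM M0 bK.
split; first by have := pos _ dfX_ge; nra.
exists L; split; first by exists Gh.
split=> //; rewrite -/(normalize _) -(normalize_img f_dilate fM M0); last lra.
have [nfX0 _] := diam_eq1_bounded (diam_normalize (pos _ dfX_ge)).
have [L0 _] := diam_eq1_bounded dL.
have s_inv : 0 <= s^-1 <= 1 by rewrite invr_ge0 invf_le1 ?(le_trans ler01 s1) //; lra.
apply: le_lt_trans (dH_le_hclose nfX0 L0 (hclose_le _ fXL)) (_ : C * s^-1 < _).
  exact: distortion_le.
rewrite ltr_pdivrMr ?ltr_pdivlMl //; first by have := mulr_ge0 (ltW r0) N0; lra.
lra.
Qed.

End EuclideanPlane.

Theorem mainTheorem6 (R : realType) (r : R) (hr : 0 < r)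
  (A : 'M[R]_2) (hA : A \in unitmx) :
  exists s0 : R, forall s : R, s0 <= s ->
    forall (G : set (set (R * R))) (K : set (R * R)),
      homothety_type G -> ncompact K -> LA s G K ->
      LA r (img_type A G) (mact A @` K).
Proof.
set M := Num.sqrt (frobenius2 A); set N := Num.sqrt (frobenius2 (invmx A)).
(* [LA s G K] alone makes [K] non-empty and bounded. *)
exists (1 + r * N + r * (N * M + 4 * N ^+ 2 * M ^+ 2)) => s s_ge G K _ _.
apply: LA_bilipschitz_img s_ge => //.
- exact: mact_dilate.
- exact: elipschitz_mact.
- exact: ecolipschitz_mact.
- exact: sqrtr_ge0.
- exact: sqrtr_ge0.
Qed.
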